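(* $hf(\mathcal{B})=\{v\}$.
   Context: A point $x$ of a space $X$ is homotopically fixed in $X$ if $h_t(x)=x$ for all $t$ for every homotopy $h_t:X\to X$ with $h_0=\mathrm{id}_X$; $hf(X)$ denotes the set of homotopically fixed points of $X$. The double broom $\mathcal{B}\subset\mathbb{R}^2$: let $v=(0,0)$, $a_0=(0,1)$, $b_0=(0,-1)$, $a_n=(1/n,0)$, $b_n=(-1/n,0)$ for $n\ge1$; let $J_{a_0}=[v,a_0]$, $J_{b_0}=[v,b_0]$, $J_{a_n}=[a_n,a_0]$, $J_{b_n}=[b_n,b_0]$ (straight segments), $A=J_{a_0}\cup\bigcup_{n\ge1}J_{a_n}$, $B=J_{b_0}\cup\bigcup_{n\ge1}J_{b_n}$, and $\mathcal{B}=A\cup B$. *)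

From Stdlib Require Import Reals.
Open Scope R_scope.

Definition pt : Type := (R * R)%type.

Definition dist2 (p q : pt) : R :=
  sqrt ((fst p - fst q)^2 + (snd p - snd q)^2).

Definition segment (p q : pt) (z : pt) : Prop :=
  exists s : R, 0 <= s <= 1 /\
    z = (fst p + s * (fst q - fst p), snd p + s * (snd q - snd p)).

Definition v_pt : pt := (0, 0).
Definition a0 : pt := (0, 1).
Definition b0 : pt := (0, -1).
Definition a_n (n : nat) : pt := (/ INR n, 0).
Definition b_n (n : nat) : pt := (- / INR n, 0).

Definition broomA (z : pt) : Prop :=
  segment v_pt a0 z \/ exists n : nat, (1 <= n)%nat /\ segment (a_n n) a0 z.
Definition broomB (z : pt) : Prop :=
  segment v_pt b0 z \/ exists n : nat, (1 <= n)%nat /\ segment (b_n n) b0 z.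

Definition double_broom (z : pt) : Prop := broomA z \/ broomB z.

Definition homotopy_from_id (X : pt -> Prop) (h : R -> pt -> pt) : Prop :=
  (forall t x, 0 <= t <= 1 -> X x -> X (h t x)) /\
  (forall x, X x -> h 0 x = x) /\
  (forall t x, 0 <= t <= 1 -> X x ->
     forall eps, 0 < eps -> exists delta, 0 < delta /\
       forall t' x', 0 <= t' <= 1 -> X x' ->
         Rabs (t' - t) < delta -> dist2 x' x < delta ->
         dist2 (h t' x') (h t x) < eps).

Definition homotopically_fixed (X : pt -> Prop) (x : pt) : Prop :=
  X x /\ forall h, homotopy_from_id X h -> forall t, 0 <= t <= 1 -> h t x = x.

From Stdlib Require Import Reals Lra Lia Rgeom Classical.
From Coquelicot Require Import Coquelicot.
Open Scope R_scope.

(* By compactness of [0,1], for large n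
   the points a_n and b_n stay within eps of h_t(v) for all t. Near their feet
   the bristles J_{a_n} and J_{b_n} are isolated from the other bristles, so a
   continuity argument in t keeps h_t(a_n) on J_{a_n} and h_t(b_n) on J_{b_n}
   at heights of opposite signs; h_t(v) is squeezed between them, hence within
   O(eps) of v.
   Every other point is moved by one of two explicit homotopies: one contracts
   each bristle horizontally and moves every point off the y-axis; the other
   slides A up its bristles, folding what passes the apex a_0 back down J_{a_0},
   and moves every point of J_{a_0} except v (and, by the symmetry z |-> -z,
   every point of J_{b_0} except v). *)

Lemma dist2_euc p q : dist2 p q = dist_euc (fst p) (snd p) (fst q) (snd q).
Proof. unfold dist2, dist_euc, Rsqr. f_equal. ring. Qed.

Lemma dist2_sym p q : dist2 p q = dist2 q p.
Proof. rewrite !dist2_euc. apply distance_symm. Qed.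

Lemma dist2_triangle p q r : dist2 p r <= dist2 p q + dist2 q r.
Proof. rewrite !dist2_euc. apply triangle. Qed.

Lemma dist2_refl p : dist2 p p = 0.
Proof.
  unfold dist2. replace ((fst p - fst p) ^ 2 + (snd p - snd p) ^ 2) with 0 by ring.
  apply sqrt_0.
Qed.

Lemma Rabs_fst_le_dist2 p q : Rabs (fst p - fst q) <= dist2 p q.
Proof.
  unfold dist2. rewrite <- (sqrt_pow2 (Rabs (fst p - fst q))) by apply Rabs_pos.
  apply sqrt_le_1_alt. rewrite pow2_abs. pose proof (pow2_ge_0 (snd p - snd q)). lra.
Qed.

Lemma Rabs_snd_le_dist2 p q : Rabs (snd p - snd q) <= dist2 p q.
Proof.
  unfold dist2. rewrite <- (sqrt_pow2 (Rabs (snd p - snd q))) by apply Rabs_pos.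
  apply sqrt_le_1_alt. rewrite pow2_abs. pose proof (pow2_ge_0 (fst p - fst q)). lra.
Qed.

Lemma dist2_le_Rabs_add p q : dist2 p q <= Rabs (fst p - fst q) + Rabs (snd p - snd q).
Proof.
  unfold dist2.
  pose proof (Rabs_pos (fst p - fst q)). pose proof (Rabs_pos (snd p - snd q)).
  rewrite <- (sqrt_pow2 (Rabs (fst p - fst q) + Rabs (snd p - snd q))) by lra.
  apply sqrt_le_1_alt. rewrite <- (pow2_abs (fst p - fst q)), <- (pow2_abs (snd p - snd q)).
  nra.
Qed.

Lemma dist2_eq0 p q : dist2 p q = 0 -> p = q.
Proof.
  intros Hpq. destruct p as [x y], q as [x' y'].
  pose proof (Rabs_fst_le_dist2 (x, y) (x', y')).
  pose proof (Rabs_snd_le_dist2 (x, y) (x', y')).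
  pose proof (Rabs_pos (x - x')). pose proof (Rabs_pos (y - y')). simpl in *.
  f_equal; apply Rminus_diag_uniq, Rabs_eq_0; lra.
Qed.

Definition opp_pt (z : pt) : pt := (- fst z, - snd z).

Lemma opp_pt_involutive z : opp_pt (opp_pt z) = z.
Proof. destruct z as [x y]. unfold opp_pt; simpl. f_equal; ring. Qed.

Lemma dist2_opp p q : dist2 (opp_pt p) (opp_pt q) = dist2 p q.
Proof. unfold dist2, opp_pt; simpl. f_equal. ring. Qed.

Lemma unit_interval_induction (P : R -> Prop) :
  P 0 ->
  (forall s, 0 <= s <= 1 -> exists eta, 0 < eta /\
     forall s0 s1, 0 <= s0 <= s -> s - eta < s0 -> s <= s1 < s + eta -> s1 <= 1 ->
       P s0 -> P s1) ->
  forall s, 0 <= s <= 1 -> P s.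
Proof.
  intros P0 Hstep.
  set (E := fun u => 0 <= u <= 1 /\ forall w, 0 <= w <= u -> P w).
  assert (E0 : E 0) by (split; [lra | intros w Hw; replace w with 0 by lra; exact P0]).
  destruct (completeness E) as [m [Hub Hlub]].
  { exists 1. intros u [Hu _]. lra. }
  { exists 0. exact E0. }
  assert (Hm : 0 <= m <= 1) by (split; [apply Hub, E0 | apply Hlub; intros u [Hu _]; lra]).
  assert (below : forall w, 0 <= w < m -> P w).
  { intros w Hw. destruct (classic (exists u, E u /\ w < u)) as [[u [[_ Hu] Hwu]] | Hnone].
    - apply Hu. lra.
    - exfalso. assert (m <= w); [|lra]. apply Hlub. intros u Eu.
      apply Rnot_lt_le. intro Hwu. apply Hnone. exists u. auto. }
  destruct (Hstep m Hm) as [eta [Heta Hprop]].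
  assert (Hs0 : exists s0, 0 <= s0 <= m /\ m - eta < s0 /\ P s0).
  { destruct (Req_dec m 0) as [Hm0 | Hm0].
    - exists 0. rewrite Hm0. repeat split; auto; lra.
    - exists (Rmax 0 (m - eta / 2)).
      assert (Rmax 0 (m - eta / 2) < m) by (apply Rmax_lub_lt; lra).
      pose proof (Rmax_l 0 (m - eta / 2)). pose proof (Rmax_r 0 (m - eta / 2)).
      repeat split; try lra. apply below. lra. }
  destruct Hs0 as [s0 [Hs0 [Hs0' Ps0]]].
  set (m' := Rmin (m + eta / 2) 1).
  assert (Hm'1 : m' <= 1) by apply Rmin_r.
  assert (Hm'2 : m' <= m + eta / 2) by apply Rmin_l.
  assert (Hm'0 : 0 <= m') by (apply Rmin_glb; lra).
  assert (Em' : E m').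
  { split; [lra |]. intros w Hw. destruct (Rlt_le_dec w m).
    - apply below. lra.
    - apply (Hprop s0 w); lra || auto. }
  assert (Hm1 : m = 1).
  { assert (m' <= m) by (apply Hub; exact Em').
    unfold m' in *. destruct (Rle_dec (m + eta / 2) 1).
    - rewrite Rmin_left in *; lra.
    - rewrite Rmin_right in *; lra. }
  intros s Hs. destruct (Rlt_le_dec s m).
  - apply below. lra.
  - apply (Hprop s0 s); lra || auto.
Qed.

Lemma homotopy_uniform_at X h x eps :
  homotopy_from_id X h -> X x -> 0 < eps ->
  exists d, 0 < d /\ forall s z, 0 <= s <= 1 -> X z -> dist2 z x < d ->
    dist2 (h s z) (h s x) < eps.
Proof.
  intros [_ [Hid Hcont]] Hx Heps.
  set (P := fun s => exists d, 0 < d /\ forall s' z, 0 <= s' <= s -> X z -> dist2 z x < d ->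
    dist2 (h s' z) (h s' x) < eps).
  assert (HP : forall s, 0 <= s <= 1 -> P s).
  { apply unit_interval_induction.
    - exists eps. split; [exact Heps |]. intros s' z Hs' Hz Hzx.
      replace s' with 0 by lra. rewrite (Hid z Hz), (Hid x Hx). exact Hzx.
    - intros s Hs. destruct (Hcont s x Hs Hx (eps / 2)) as [eta [Heta Hnear]]; [lra |].
      exists eta. split; [exact Heta |].
      intros s0 s1 Hs0 Hs0' Hs1 Hs1' [d0 [Hd0 Hunif]].
      exists (Rmin d0 eta). split; [apply Rmin_glb_lt; lra |].
      intros s' z Hs' Hz Hzx. pose proof (Rmin_l d0 eta). pose proof (Rmin_r d0 eta).
      destruct (Rle_lt_dec s' s0).
      + apply Hunif; [lra | exact Hz | lra].
      + assert (Hss : Rabs (s' - s) < eta) by (apply Rabs_def1; lra).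
        assert (dist2 (h s' z) (h s x) < eps / 2) by (apply Hnear; auto; lra).
        assert (dist2 (h s' x) (h s x) < eps / 2)
          by (apply Hnear; auto; [lra | rewrite dist2_refl; lra]).
        pose proof (dist2_triangle (h s' z) (h s x) (h s' x)).
        rewrite (dist2_sym (h s x)) in *. lra. }
  destruct (HP 1 ltac:(lra)) as [d [Hd Hunif]].
  exists d. split; [exact Hd |]. intros s z Hs Hz Hzx. apply Hunif; auto.
Qed.

Lemma homotopy_drift X h x s eps :
  homotopy_from_id X h -> X x -> 0 <= s <= 1 -> 0 < eps ->
  exists eta, 0 < eta /\ forall s0 s1, 0 <= s0 <= 1 -> 0 <= s1 <= 1 ->
    Rabs (s0 - s) < eta -> Rabs (s1 - s) < eta -> dist2 (h s1 x) (h s0 x) < eps.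
Proof.
  intros [_ [_ Hcont]] Hx Hs Heps.
  destruct (Hcont s x Hs Hx (eps / 2)) as [eta [Heta Hnear]]; [lra |].
  exists eta. split; [exact Heta |]. intros s0 s1 Hs0 Hs1 Hs0s Hs1s.
  assert (Hxx : dist2 x x < eta) by (rewrite dist2_refl; exact Heta).
  pose proof (Hnear s0 x Hs0 Hx Hs0s Hxx). pose proof (Hnear s1 x Hs1 Hx Hs1s Hxx).
  pose proof (dist2_triangle (h s1 x) (h s x) (h s0 x)).
  rewrite (dist2_sym (h s x)) in *. lra.
Qed.

Lemma homotopy_conj_opp X h :
  (forall z, X z -> X (opp_pt z)) -> homotopy_from_id X h ->
  homotopy_from_id X (fun t z => opp_pt (h t (opp_pt z))).
Proof.
  intros Hsym [Hmaps [Hid Hcont]]. split; [| split].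
  - intros t z Ht Hz. auto.
  - intros z Hz. rewrite Hid by auto. apply opp_pt_involutive.
  - intros t z Ht Hz eps Heps.
    destruct (Hcont t (opp_pt z) Ht (Hsym z Hz) eps Heps) as [d [Hd Hnear]].
    exists d. split; [exact Hd |]. intros t' z' Ht' Hz' Htt Hzz.
    rewrite dist2_opp. apply Hnear; auto. rewrite dist2_opp. exact Hzz.
Qed.

Definition cont_within (X : pt -> Prop) (F : R -> pt -> R) (t : R) (z : pt) : Prop :=
  forall eps, 0 < eps -> exists delta, 0 < delta /\
    forall t' z', 0 <= t' <= 1 -> X z' -> Rabs (t' - t) < delta -> dist2 z' z < delta ->
      Rabs (F t' z' - F t z) < eps.

Lemma cont_within_of_continuous X F t z :
  continuous (fun p : R * pt => F (fst p) (snd p)) (t, z) -> cont_within X F t z.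
Proof.
  intros HF eps Heps.
  destruct (proj1 (filterlim_locally _ _) HF (mkposreal eps Heps)) as [d Hd].
  exists d. split; [apply cond_pos |]. intros t' z' _ _ Ht Hz.
  apply (Hd (t', z')). repeat split; simpl.
  - exact Ht.
  - eapply Rle_lt_trans; [apply Rabs_fst_le_dist2 | exact Hz].
  - eapply Rle_lt_trans; [apply Rabs_snd_le_dist2 | exact Hz].
Qed.

Lemma homotopy_of_cont_within X h :
  (forall t z, 0 <= t <= 1 -> X z -> X (h t z)) ->
  (forall z, X z -> h 0 z = z) ->
  (forall t z, 0 <= t <= 1 -> X z ->
     cont_within X (fun t z => fst (h t z)) t z /\
     cont_within X (fun t z => snd (h t z)) t z) ->
  homotopy_from_id X h.
Proof.
  intros Hmaps Hid Hcont. split; [exact Hmaps | split; [exact Hid |]].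
  intros t z Ht Hz eps Heps. destruct (Hcont t z Ht Hz) as [HF HG].
  destruct (HF (eps / 2)) as [d1 [Hd1 H1]]; [lra |].
  destruct (HG (eps / 2)) as [d2 [Hd2 H2]]; [lra |].
  exists (Rmin d1 d2). split; [apply Rmin_glb_lt; lra |].
  intros t' z' Ht' Hz' Htt Hzz. pose proof (Rmin_l d1 d2). pose proof (Rmin_r d1 d2).
  assert (Rabs (fst (h t' z') - fst (h t z)) < eps / 2) by (apply H1; auto; lra).
  assert (Rabs (snd (h t' z') - snd (h t z)) < eps / 2) by (apply H2; auto; lra).
  pose proof (dist2_le_Rabs_add (h t' z') (h t z)). lra.
Qed.

(* Proves [continuous (fun p : R * pt => E) x] for an arithmetic expression E in
   [fst p], [fst (snd p)], [snd (snd p)] and [Rabs], leaving the nonvanishing of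
   denominators as side goals. *)
Ltac continuity_tac :=
  repeat match goal with
  | |- continuous (fun _ => ?c) _ => apply continuous_const
  | |- continuous (fun p => @?f p * @?g p) _ =>
      apply (continuous_mult (K := R_AbsRing) f g)
  | |- continuous (fun p => @?f p + @?g p) _ =>
      apply (continuous_plus (V := R_NormedModule) f g)
  | |- continuous (fun p => @?f p - @?g p) _ =>
      apply (continuous_plus (V := R_NormedModule) f (fun p => - g p));
      [| apply (continuous_opp (V := R_NormedModule) g)]
  | |- continuous (fun p => - @?f p) _ => apply (continuous_opp (V := R_NormedModule) f)
  | |- continuous (fun p => Rabs (@?f p)) _ =>
      apply (continuous_comp f Rabs); [| apply continuous_Rabs]
  | |- continuous (fun p => / (@?f p)) _ =>
      apply (continuous_comp f Rinv); [| apply continuous_Rinv]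
  | |- continuous (fun p => fst p) _ => apply continuous_fst
  | |- continuous (fun p => fst (snd p)) _ =>
      apply (continuous_comp snd fst); [apply continuous_snd | apply continuous_fst]
  | |- continuous (fun p => snd (snd p)) _ =>
      apply (continuous_comp snd snd); apply continuous_snd
  end.

Definition bristle_foot (c : R) : Prop := c = 0 \/ exists n, (1 <= n)%nat /\ c = / INR n.

(* The point at height s on the segment from (c, 0) to a0: J_{a_n} for c = 1/n, J_{a0} for c = 0. *)
Definition bristle (c s : R) : pt := ((1 - s) * c, s).

Lemma double_broom_iff z :
  double_broom z <-> exists c s, bristle_foot c /\ 0 <= s <= 1 /\
    (z = bristle c s \/ z = opp_pt (bristle c s)).
Proof.
  unfold double_broom, broomA, broomB, segment, bristle, opp_pt, bristle_foot.
  unfold v_pt, a0, b0, a_n, b_n; simpl. split.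
  - intros [[[s [Hs ->]] | [n [Hn [s [Hs ->]]]]] | [[s [Hs ->]] | [n [Hn [s [Hs ->]]]]]].
    + exists 0, s. split; [left; reflexivity | split; [exact Hs | left; f_equal; ring]].
    + exists (/ INR n), s. split; [right; eauto | split; [exact Hs | left; f_equal; ring]].
    + exists 0, s. split; [left; reflexivity | split; [exact Hs | right; f_equal; ring]].
    + exists (/ INR n), s. split; [right; eauto | split; [exact Hs | right; f_equal; ring]].
  - intros [c [s [[-> | [n [Hn ->]]] [Hs [-> | ->]]]]].
    + left; left. exists s. split; auto. f_equal; ring.
    + right; left. exists s. split; auto. f_equal; ring.
    + left; right. exists n. split; auto. exists s. split; auto. f_equal; ring.
    + right; right. exists n. split; auto. exists s. split; auto. f_equal; ring.
Qed.

Lemma double_broom_bristle c s : bristle_foot c -> 0 <= s <= 1 -> double_broom (bristle c s).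
Proof. intros Hc Hs. apply double_broom_iff. exists c, s. auto. Qed.

Lemma double_broom_opp z : double_broom z -> double_broom (opp_pt z).
Proof.
  intros Hz. apply double_broom_iff in Hz as [c [s [Hc [Hs [-> | ->]]]]];
    apply double_broom_iff; exists c, s; (split; [exact Hc | split; [exact Hs |]]).
  - right. reflexivity.
  - left. apply opp_pt_involutive.
Qed.

Lemma double_broom_v : double_broom v_pt.
Proof.
  replace v_pt with (bristle 0 0) by (unfold bristle, v_pt; f_equal; ring).
  apply double_broom_bristle; [left |]; auto; lra.
Qed.

Lemma le_1_INR n : (1 <= n)%nat -> 1 <= INR n.
Proof. intros Hn. apply (le_INR 1 n) in Hn. exact Hn. Qed.

Lemma inv_INR_bounds n : (1 <= n)%nat -> 0 < / INR n <= 1.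
Proof.
  intros Hn. pose proof (le_1_INR n Hn). split.
  - apply Rinv_0_lt_compat. lra.
  - rewrite <- Rinv_1. apply Rinv_le_contravar; lra.
Qed.

Lemma bristle_foot_bounds c : bristle_foot c -> 0 <= c <= 1.
Proof. intros [-> | [n [Hn ->]]]; [lra | pose proof (inv_INR_bounds n Hn); lra]. Qed.

Lemma bristle_foot_separated c n :
  bristle_foot c -> (1 <= n)%nat -> c <> / INR n -> (/ INR n) ^ 2 / 2 <= Rabs (c - / INR n).
Proof.
  intros Hc Hn Hne. pose proof (le_1_INR n Hn). pose proof (inv_INR_bounds n Hn).
  assert (HN : INR n * / INR n = 1) by (field; lra).
  destruct Hc as [-> | [m [Hm ->]]].
  - rewrite Rminus_0_l, Rabs_Ropp, Rabs_right by lra. nra.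
  - pose proof (le_1_INR m Hm). pose proof (inv_INR_bounds m Hm).
    assert (HM : INR m * / INR m = 1) by (field; lra).
    destruct (Nat.lt_total m n) as [Hlt | [-> | Hgt]].
    + assert (INR m + 1 <= INR n) by (rewrite <- S_INR; apply le_INR; lia).
      assert (/ INR m - / INR n = / INR m * / INR n * (INR n - INR m)) by (field; lra).
      rewrite Rabs_right by nra. nra.
    + contradiction.
    + assert (INR n + 1 <= INR m) by (rewrite <- S_INR; apply le_INR; lia).
      assert (/ INR n - / INR m = / INR m * / INR n * (INR m - INR n)) by (field; lra).
      assert (/ INR m * (INR m - INR n) * 2 >= / INR n) by nra.
      rewrite Rabs_left1 by nra. nra.
Qed.

Lemma bristle_isolated n sg w :
  (1 <= n)%nat -> 0 <= sg <= 1/4 -> double_broom w ->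
  dist2 w (bristle (/ INR n) sg) < (/ INR n) ^ 2 / 8 ->
  exists s, 0 <= s <= 1 /\ w = bristle (/ INR n) s.
Proof.
  intros Hn Hsg Hw Hd. pose proof (inv_INR_bounds n Hn) as Hc0.
  set (c0 := / INR n) in *.
  pose proof (Rabs_fst_le_dist2 w (bristle c0 sg)) as Hx.
  pose proof (Rabs_snd_le_dist2 w (bristle c0 sg)) as Hy.
  apply double_broom_iff in Hw as [c [s [Hc [Hs [-> | ->]]]]];
    pose proof (bristle_foot_bounds c Hc); unfold bristle, opp_pt in *; simpl in *.
  - destruct (Req_dec c c0) as [-> | Hne]; [exists s; auto |]. exfalso.
    pose proof (bristle_foot_separated c n Hc Hn Hne) as Hsep. fold c0 in Hsep.
    (* the feet are c0^2/2 apart, the heights less than c0^2/8 *)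
    pose proof (Rabs_triang_inv ((1 - sg) * (c - c0)) ((s - sg) * c)) as Htri.
    replace ((1 - sg) * (c - c0) - (s - sg) * c) with ((1 - s) * c - (1 - sg) * c0)
      in Htri by ring.
    rewrite !Rabs_mult, (Rabs_right (1 - sg)), (Rabs_right c) in Htri by lra.
    pose proof (Rabs_pos (s - sg)). nra.
  - exfalso. rewrite Rabs_left in Hx by nra. nra.
Qed.

Lemma bristle_heights_le_dist2 c c' sa sb :
  0 <= sa -> 0 <= sb -> sa + sb <= dist2 (bristle c sa) (opp_pt (bristle c' sb)).
Proof.
  intros Hsa Hsb. pose proof (Rabs_snd_le_dist2 (bristle c sa) (opp_pt (bristle c' sb))).
  unfold bristle, opp_pt in *; simpl in *. rewrite Rabs_right in * by lra. lra.
Qed.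

Lemma dist2_bristle_v c s : 0 <= c -> 0 <= s <= 1 -> dist2 (bristle c s) v_pt <= c + s.
Proof.
  intros Hc Hs. eapply Rle_trans; [apply dist2_le_Rabs_add |].
  unfold bristle, v_pt; simpl. rewrite !Rminus_0_r, !Rabs_right by nra. nra.
Qed.

Lemma a_n_bristle n : a_n n = bristle (/ INR n) 0.
Proof. unfold a_n, bristle. f_equal; ring. Qed.

Lemma b_n_opp_bristle n : b_n n = opp_pt (bristle (/ INR n) 0).
Proof. unfold b_n, bristle, opp_pt; simpl. f_equal; ring. Qed.

Lemma double_broom_a_n n : (1 <= n)%nat -> double_broom (a_n n).
Proof. intros Hn. rewrite a_n_bristle. apply double_broom_bristle; [right; eauto | lra]. Qed.

Lemma double_broom_b_n n : (1 <= n)%nat -> double_broom (b_n n).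
Proof.
  intros Hn. rewrite b_n_opp_bristle, <- a_n_bristle.
  apply double_broom_opp, double_broom_a_n, Hn.
Qed.

Lemma bristles_tracked h n :
  homotopy_from_id double_broom h -> (1 <= n)%nat ->
  (forall s, 0 <= s <= 1 -> dist2 (h s (a_n n)) (h s (b_n n)) < 1/4) ->
  forall s, 0 <= s <= 1 ->
    (exists sa, 0 <= sa <= 1 /\ h s (a_n n) = bristle (/ INR n) sa) /\
    (exists sb, 0 <= sb <= 1 /\ h s (b_n n) = opp_pt (bristle (/ INR n) sb)).
Proof.
  intros Hh Hn Hclose. pose proof Hh as [Hmaps [Hid _]].
  pose proof (inv_INR_bounds n Hn) as Hc0.
  pose proof (double_broom_a_n n Hn) as Ba. pose proof (double_broom_b_n n Hn) as Bb.
  assert (Hr : 0 < (/ INR n) ^ 2 / 8) by nra.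
  apply unit_interval_induction.
  - rewrite !Hid by assumption.
    split; [exists 0; rewrite a_n_bristle | exists 0; rewrite b_n_opp_bristle]; split; auto; lra.
  - intros s Hs.
    destruct (homotopy_drift _ h _ s _ Hh Ba Hs Hr) as [ea [Hea Hdrifta]].
    destruct (homotopy_drift _ h _ s _ Hh Bb Hs Hr) as [eb [Heb Hdriftb]].
    pose proof (Rmin_l ea eb). pose proof (Rmin_r ea eb).
    exists (Rmin ea eb). split; [apply Rmin_glb_lt; lra |].
    intros s0 s1 Hs0 Hs0' Hs1 Hs1' [[sa [Hsa Ea]] [sb [Hsb Eb]]].
    assert (Hs0s : Rabs (s0 - s) < Rmin ea eb) by (apply Rabs_def1; lra).
    assert (Hs1s : Rabs (s1 - s) < Rmin ea eb) by (apply Rabs_def1; lra).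
    assert (Hsmall : sa + sb < 1/4).
    { pose proof (Hclose s0 ltac:(lra)) as Hd. rewrite Ea, Eb in Hd.
      pose proof (bristle_heights_le_dist2 (/ INR n) (/ INR n) sa sb). lra. }
    split.
    + apply (bristle_isolated n sa); [exact Hn | lra | apply Hmaps; auto; lra |].
      rewrite <- Ea. apply Hdrifta; lra.
    + destruct (bristle_isolated n sb (opp_pt (h s1 (b_n n)))) as [sb' [Hsb' Eb']];
        [exact Hn | lra | apply double_broom_opp, Hmaps; auto; lra | |].
      * rewrite <- (opp_pt_involutive (bristle _ sb)), dist2_opp, <- Eb.
        apply Hdriftb; lra.
      * exists sb'. split; [exact Hsb' |].
        rewrite <- (opp_pt_involutive (h s1 (b_n n))). f_equal. exact Eb'.
Qed.

Lemma homotopy_v_close h t eps :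
  homotopy_from_id double_broom h -> 0 <= t <= 1 -> 0 < eps <= 1/8 ->
  dist2 (h t v_pt) v_pt < 4 * eps.
Proof.
  intros Hh Ht Heps.
  destruct (homotopy_uniform_at _ h v_pt eps Hh double_broom_v ltac:(lra)) as [d [Hd Hunif]].
  destruct (archimed_cor1 (Rmin d eps)) as [n [Hnd Hn]]; [apply Rmin_glb_lt; lra |].
  assert (Hn1 : (1 <= n)%nat) by lia.
  pose proof (Rmin_l d eps). pose proof (Rmin_r d eps). pose proof (inv_INR_bounds n Hn1).
  assert (Hv : opp_pt v_pt = v_pt) by (unfold opp_pt, v_pt; simpl; f_equal; ring).
  pose proof (dist2_bristle_v (/ INR n) 0 ltac:(lra) ltac:(lra)) as Hfoot.
  assert (Hnear : forall s, 0 <= s <= 1 ->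
    dist2 (h s (a_n n)) (h s v_pt) < eps /\ dist2 (h s (b_n n)) (h s v_pt) < eps).
  { intros s Hs. split; apply Hunif; auto using double_broom_a_n, double_broom_b_n.
    - rewrite a_n_bristle. lra.
    - rewrite b_n_opp_bristle, <- Hv, dist2_opp. lra. }
  assert (Hab : forall s, 0 <= s <= 1 -> dist2 (h s (a_n n)) (h s (b_n n)) < 2 * eps).
  { intros s Hs. destruct (Hnear s Hs) as [Hna Hnb].
    pose proof (dist2_triangle (h s (a_n n)) (h s v_pt) (h s (b_n n))).
    rewrite (dist2_sym (h s v_pt)) in *. lra. }
  destruct (bristles_tracked h n Hh Hn1 ltac:(intros s Hs; specialize (Hab s Hs); lra) t Ht)
    as [[sa [Hsa Ea]] [sb [Hsb Eb]]].
  pose proof (Hab t Ht) as Habt. rewrite Ea, Eb in Habt.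
  pose proof (bristle_heights_le_dist2 (/ INR n) (/ INR n) sa sb ltac:(lra) ltac:(lra)).
  pose proof (dist2_bristle_v (/ INR n) sa ltac:(lra) Hsa).
  destruct (Hnear t Ht) as [Hta _]. rewrite Ea, dist2_sym in Hta.
  pose proof (dist2_triangle (h t v_pt) (bristle (/ INR n) sa) v_pt). lra.
Qed.

Lemma v_fixed h t : homotopy_from_id double_broom h -> 0 <= t <= 1 -> h t v_pt = v_pt.
Proof.
  intros Hh Ht. apply dist2_eq0, Rle_antisym; [| apply sqrt_pos].
  apply le_epsilon. intros e He.
  pose proof (Rmin_l (1/8) (e / 4)). pose proof (Rmin_r (1/8) (e / 4)).
  assert (0 < Rmin (1/8) (e / 4)) by (apply Rmin_glb_lt; lra).
  pose proof (homotopy_v_close h t (Rmin (1/8) (e / 4)) Hh Ht ltac:(lra)). lra.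
Qed.

Definition contract (t : R) (z : pt) : pt :=
  (fst z * (1 - t * Rabs (fst z) / 2), snd z + t * (1 - Rabs (snd z)) * fst z / 2).

Lemma contract_bristle t c s : 0 <= c -> 0 <= s <= 1 ->
  contract t (bristle c s) = bristle c (s + t * (1 - s) ^ 2 * c / 2).
Proof.
  intros Hc Hs. unfold contract, bristle; simpl.
  rewrite (Rabs_right ((1 - s) * c)), (Rabs_right s) by nra. f_equal; field.
Qed.

Lemma contract_opp t z : contract t (opp_pt z) = opp_pt (contract t z).
Proof. unfold contract, opp_pt; simpl. rewrite !Rabs_Ropp. f_equal; field. Qed.

Lemma contract_homotopy : homotopy_from_id double_broom contract.
Proof.
  apply homotopy_of_cont_within.
  - intros t z Ht Hz.
    assert (Hlow : forall c s, bristle_foot c -> 0 <= s <= 1 ->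
      double_broom (contract t (bristle c s))).
    { intros c s Hc Hs. pose proof (bristle_foot_bounds c Hc).
      rewrite contract_bristle by lra. apply double_broom_bristle; [exact Hc |].
      assert (0 <= t * (1 - s) ^ 2 * c) by (repeat apply Rmult_le_pos; lra).
      assert (Hct : (1 - s) * c * t <= 1) by (assert ((1 - s) * c <= 1) by nra; nra).
      pose proof (Rmult_le_compat_l (1 - s) _ _ ltac:(lra) Hct). lra. }
    apply double_broom_iff in Hz as [c [s [Hc [Hs [-> | ->]]]]].
    + auto.
    + rewrite contract_opp. apply double_broom_opp. auto.
  - intros z _. unfold contract. destruct z; simpl. f_equal; field.
  - intros t [x y] _ _. split; apply cont_within_of_continuous;
      unfold contract, Rdiv; simpl; continuity_tac; lra.
Qed.

Lemma contract_moves z : fst z <> 0 -> contract 1 z <> z.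
Proof.
  intros Hx Heq. apply (f_equal fst) in Heq. unfold contract in Heq; simpl in Heq.
  pose proof (Rabs_pos_lt _ Hx) as Habs.
  assert (Hprod : fst z * Rabs (fst z) = 0) by nra.
  apply Rmult_integral in Hprod as [|]; lra.
Qed.

(* The positive part of y, written with [Rabs] so that [continuity_tac] applies. *)
Definition pos_part (y : R) : R := (y + Rabs y) / 2.

Lemma pos_part_nonneg y : 0 <= y -> pos_part y = y.
Proof. intros Hy. unfold pos_part. rewrite Rabs_right by lra. field. Qed.

Lemma pos_part_nonpos y : y <= 0 -> pos_part y = 0.
Proof. intros Hy. unfold pos_part. rewrite Rabs_left1 by lra. field. Qed.

(* On A, sends height s to s (1 + t) reflected at 1, i.e. past the apex and
   back down J_{a0}; B is fixed. The foot c of the bristle is recovered as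
   x / (1 - s), which is singular at the apex: there continuity comes from
   |fst (fold_up t z)| <= |fst z| instead. *)
Definition fold_up (t : R) (z : pt) : pt :=
  let u := pos_part (snd z) * (1 + t) in
  (fst z * ((1 - u + Rabs (1 - u)) / 2) / (1 - pos_part (snd z)),
   snd z - pos_part (snd z) + 1 - Rabs (1 - u)).

Lemma fold_up_bristle_low t c s : 0 <= t <= 1 -> 0 <= s <= 1 -> s * (1 + t) <= 1 ->
  fold_up t (bristle c s) = bristle c (s * (1 + t)).
Proof.
  intros Ht Hs Hu. unfold fold_up, bristle; simpl. rewrite pos_part_nonneg by lra.
  rewrite Rabs_right by lra. destruct (Req_dec s 1) as [-> | Hs1].
  - assert (t = 0) by nra. subst t. f_equal; unfold Rdiv; ring.
  - f_equal; [field; lra | ring].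
Qed.

Lemma fold_up_bristle_high t c s : 0 <= s <= 1 -> 1 < s * (1 + t) ->
  fold_up t (bristle c s) = bristle 0 (2 - s * (1 + t)).
Proof.
  intros Hs Hu. unfold fold_up, bristle; simpl. rewrite pos_part_nonneg by lra.
  rewrite Rabs_left by lra. f_equal; unfold Rdiv; ring.
Qed.

Lemma fold_up_opp_bristle t c s : 0 <= s ->
  fold_up t (opp_pt (bristle c s)) = opp_pt (bristle c s).
Proof.
  intros Hs. unfold fold_up, bristle, opp_pt; simpl. rewrite pos_part_nonpos by lra.
  rewrite Rabs_right by lra. f_equal; field.
Qed.

Lemma fold_up_on_broom t z : 0 <= t <= 1 -> double_broom z ->
  double_broom (fold_up t z) /\ Rabs (fst (fold_up t z)) <= Rabs (fst z).
Proof.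
  intros Ht Hz. apply double_broom_iff in Hz as [c [s [Hc [Hs [-> | ->]]]]];
    pose proof (bristle_foot_bounds c Hc).
  - destruct (Rle_lt_dec (s * (1 + t)) 1) as [Hu | Hu].
    + rewrite fold_up_bristle_low by lra. split; [apply double_broom_bristle; auto; split; nra |].
      assert (0 <= s * t * c) by (repeat apply Rmult_le_pos; lra).
      unfold bristle; simpl. rewrite !Rabs_right by nra. lra.
    + rewrite fold_up_bristle_high by lra.
      split; [apply double_broom_bristle; [left | split]; auto; nra |].
      unfold bristle; simpl. rewrite Rmult_0_r, Rabs_R0. apply Rabs_pos.
  - rewrite fold_up_opp_bristle by lra.
    split; [apply double_broom_opp, double_broom_bristle |]; auto; lra.
Qed.

Lemma fold_up_id z : double_broom z -> fold_up 0 z = z.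
Proof.
  intros Hz. apply double_broom_iff in Hz as [c [s [Hc [Hs [-> | ->]]]]].
  - rewrite fold_up_bristle_low by lra. f_equal. ring.
  - apply fold_up_opp_bristle. lra.
Qed.

Lemma fold_up_homotopy : homotopy_from_id double_broom fold_up.
Proof.
  apply homotopy_of_cont_within.
  - intros t z Ht Hz. apply fold_up_on_broom; auto.
  - exact fold_up_id.
  - intros t [x y] Ht Hz. split.
    + destruct (Req_dec y 1) as [-> | Hy1].
      * assert (Hx : x = 0).
        { apply double_broom_iff in Hz as [c [s [_ [Hs [E | E]]]]];
            unfold bristle, opp_pt in E; simpl in E; injection E as Ex Ey.
          - rewrite Ex, <- Ey. ring.
          - lra. }
        subst x. intros eps Heps. exists eps. split; [exact Heps |].
        intros t' z' Ht' Hz' _ Hzz. cbv beta.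
        replace (fst (fold_up t (0, 1))) with 0 by (unfold fold_up, Rdiv; simpl; ring).
        pose proof (Rabs_fst_le_dist2 z' (0, 1)) as Hx'.
        change (fst (0, 1)) with 0 in Hx'. rewrite Rminus_0_r in *.
        pose proof (proj2 (fold_up_on_broom t' z' Ht' Hz')). lra.
      * apply cont_within_of_continuous. unfold fold_up, pos_part, Rdiv; simpl.
        continuity_tac; try lra.
        intro E. simpl in E. apply Hy1. destruct (Rle_lt_dec 0 y).
        -- rewrite Rabs_right in E; lra.
        -- rewrite Rabs_left in E; lra.
    + apply cont_within_of_continuous. unfold fold_up, pos_part, Rdiv; simpl.
      continuity_tac.
Qed.

Lemma fold_up_moves y : 0 < y <= 1 -> exists t, 0 <= t <= 1 /\ fold_up t (0, y) <> (0, y).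
Proof.
  intros Hy. replace (0, y) with (bristle 0 y) by (unfold bristle; f_equal; ring).
  destruct (Req_dec y 1) as [-> | Hy1].
  - exists 1. split; [lra |]. rewrite fold_up_bristle_high by lra.
    intro E. apply (f_equal snd) in E. simpl in E. lra.
  - exists (1 - y). split; [lra |]. rewrite fold_up_bristle_low by nra.
    intro E. apply (f_equal snd) in E. simpl in E. nra.
Qed.

Lemma moved_unless_v z : double_broom z -> z <> v_pt ->
  exists h t, homotopy_from_id double_broom h /\ 0 <= t <= 1 /\ h t z <> z.
Proof.
  intros Hz Hzv. destruct z as [x y].
  destruct (Req_dec x 0) as [-> | Hx].
  2: { exists contract, 1. split; [exact contract_homotopy |].
       split; [lra | apply contract_moves; auto]. }
  assert (Hy : -1 <= y <= 1).
  { apply double_broom_iff in Hz as [c [s [_ [Hs [E | E]]]]];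
      unfold bristle, opp_pt in E; simpl in E; injection E as _ ->; lra. }
  destruct (Rtotal_order y 0) as [Hneg | [-> | Hpos]].
  - destruct (fold_up_moves (- y)) as [t [Ht Hmoved]]; [lra |].
    exists (fun t z => opp_pt (fold_up t (opp_pt z))), t.
    split; [apply homotopy_conj_opp; [exact double_broom_opp | exact fold_up_homotopy] |].
    split; [exact Ht |].
    replace (opp_pt (0, y)) with (0, - y) by (unfold opp_pt; simpl; f_equal; ring).
    intro E. apply Hmoved. rewrite <- (opp_pt_involutive (fold_up t (0, - y))), E.
    unfold opp_pt; simpl. f_equal; ring.
  - contradiction.
  - destruct (fold_up_moves y) as [t [Ht Hmoved]]; [lra |].
    exists fold_up, t. auto using fold_up_homotopy.
Qed.

Theorem corollary3p3 :
  forall x : pt, homotopically_fixed double_broom x <-> x = v_pt.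
Proof.
  intros x. split.
  - intros [Hx Hfixed]. apply NNPP. intro Hxv.
    destruct (moved_unless_v x Hx Hxv) as [h [t [Hh [Ht Hmoved]]]].
    exact (Hmoved (Hfixed h Hh t Ht)).
  - intros ->. split; [exact double_broom_v |]. intros h Hh t Ht. exact (v_fixed h t Hh Ht).
Qed.
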